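(* Let $P$ be a Poisson tensor on $\mathbb{R}^3$, let $H\in C^\infty(\mathbb{R}^3)$, let $S\in C^\infty(\mathbb{R}^3)$ satisfy $PdS=0$, and let $g$ be the symmetric tensor with components $g^{ij}=H^iH^j-\delta^{ij}\sum_k H^kH^k$. Let $\xi=PdH+gdS$ and $\xi_P=PdH$. Then for $x\in\mathbb{R}^3$, $\xi(x)=\xi_P(x)$ if and only if either $d_xH=0$, or $x$ is a critical point of the restriction of $S$ to the level surface $\{H=H(x)\}$.
   Context: $\mathbb{R}^3$ carries the standard Euclidean metric, used to identify tangent and cotangent spaces with $\mathbb{R}^3$; $H^i=H_i=\partial H/\partial x^i$. A Poisson tensor is a skew-symmetric bivector field satisfying the Jacobi identity. *)

From HB Require Import structures.
From mathcomp Require Import all_boot all_order all_algebra.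
From mathcomp Require Import all_classical all_reals all_analysis.
Set Implicit Arguments. Unset Strict Implicit. Unset Printing Implicit Defensive.
Import Order.TTheory GRing.Theory Num.Theory.
Import numFieldNormedType.Exports.
Local Open Scope ring_scope.

Section Defs.
Variable R : realType.
Notation V := 'rV[R]_3.

Definition ebase (i : 'I_3) : V := delta_mx 0 i.

Definition partial (i : 'I_3) (f : V -> R) : V -> R :=
  fun x => 'D_(ebase i) f x.

Fixpoint Ck (k : nat) (f : V -> R) : Prop :=
  match k with
  | 0 => continuous f
  | k'.+1 => continuous f /\
      (forall x i, derivable f x (ebase i)) /\
      (forall i, Ck k' (partial i f))
  end.

Definition smooth (f : V -> R) : Prop := forall k, Ck k f.

Definition poisson_tensor (P : V -> 'M[R]_3) : Prop :=
  (forall i j, smooth (fun x => P x i j)) /\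
  (forall x i j, P x i j = - P x j i) /\
  (forall x i j k,
     \sum_(l < 3) (P x i l * partial l (fun y => P y j k) x
                 + P x j l * partial l (fun y => P y k i) x
                 + P x k l * partial l (fun y => P y i j) x) = 0).

Definition Pd (P : V -> 'M[R]_3) (F : V -> R) (x : V) : V :=
  \row_i \sum_(j < 3) P x i j * partial j F x.

Definition gmetric (H : V -> R) (x : V) : 'M[R]_3 :=
  \matrix_(i, j) (partial i H x * partial j H x
     - (i == j)%:R * \sum_(k < 3) partial k H x * partial k H x).

Definition gd (H F : V -> R) (x : V) : V :=
  \row_i \sum_(j < 3) gmetric H x i j * partial j F x.

Definition xi (P : V -> 'M[R]_3) (H S : V -> R) (x : V) : V := Pd P H x + gd H S x.
Definition xiP (P : V -> 'M[R]_3) (H : V -> R) (x : V) : V := Pd P H x.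

(* x is a critical point of the restriction of S to the level surface
   {y | H y = H x}: the differential d_xS vanishes on the tangent space
   T_x{H = H x} = ker d_xH (this is the meaning when d_xH <> 0, the only
   case in which the notion is used non-vacuously in the theorem). *)
Definition crit_on_level (S H : V -> R) (x : V) : Prop :=
  forall v : V, 'd H x v = 0 -> 'd S x v = 0.

End Defs.

From HB Require Import structures.
From mathcomp Require Import all_boot all_order all_algebra.
From mathcomp Require Import all_classical all_reals all_analysis.
From mathcomp Require Import ring.
Import Order.TTheory GRing.Theory Num.Theory.
Import numFieldNormedType.Exports.
Set Implicit Arguments.
Unset Strict Implicit.
Unset Printing Implicit Defensive.
Local Open Scope ring_scope.

(* Write a = grad H x and b = grad S x. By definition of g, xi x - xiP x = g dS
   = (a.b) a - |a|^2 b, so neither the Jacobi identity of P nor PdS = 0 plays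
   a role.  This vector vanishes iff a = 0 or dS vanishes on ker dH = a^perp:
   if a.v = 0 implies b.v = 0, then w := (a.b) a - |a|^2 b lies in a^perp, so
   w.b = 0 and |w|^2 = (a.b)(w.a) - |a|^2 (w.b) = 0.  Identifying d_xH with
   v |-> a.v only needs continuous partial derivatives: along the axis-parallel
   path from x to x + h the mean value theorem turns H (x + h) - H x - a.h into
   a sum of n terms o(|h|). *)

Section vdot.
Variables (R : realDomainType) (n : nat).
Implicit Types a b u v : 'rV[R]_n.

Definition vdot u v : R := \sum_i u 0 i * v 0 i.

Lemma vdotC u v : vdot u v = vdot v u.
Proof. by apply: eq_bigr => i _; rewrite mulrC. Qed.

Lemma vdot_is_linear u : linear (vdot u : _ -> R^o).
Proof.
move=> k v w; rewrite /vdot /GRing.scale /= mulr_sumr -big_split /=.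
by apply: eq_bigr => i _; rewrite !mxE mulrDr mulrCA.
Qed.

HB.instance Definition _ u :=
  GRing.isLinear.Build R 'rV[R]_n R^o *:%R (vdot u) (vdot_is_linear u).

Lemma vdotZr k u v : vdot u (k *: v) = k * vdot u v.
Proof. exact: linearZ. Qed.

Lemma vdot_self_eq0 u : (vdot u u == 0) = (u == 0).
Proof.
rewrite psumr_eq0 => [|i _]; last by rewrite -expr2 sqr_ge0.
apply/idP/eqP => [/allP u0|->]; last by apply/allP => i _; rewrite mxE mulr0 eqxx.
apply/rowP => i; rewrite mxE; apply/eqP.
by rewrite -sqrf_eq0 expr2; apply: u0; rewrite mem_index_enum.
Qed.

Lemma orth_part_eq0P a b :
  vdot a b *: a - vdot a a *: b = 0 <->
  (forall v, vdot a v = 0) \/ (forall v, vdot a v = 0 -> vdot b v = 0).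
Proof.
set w := _ - _; split=> [w0|[a0|ab]].
- have [/eqP|aa0] := eqVneq (vdot a a) 0.
    by rewrite vdot_self_eq0 => /eqP->; left=> v; rewrite vdotC linear0.
  right=> v av0; have /eqP : vdot v w = 0 by rewrite w0 linear0.
  rewrite linearB /= !vdotZr ![vdot v _]vdotC av0 mulr0 sub0r oppr_eq0.
  by rewrite mulf_eq0 (negPf aa0) => /eqP.
- have /eqP a_eq0 : a == 0 by rewrite -vdot_self_eq0 a0.
  by rewrite /w a_eq0 scaler0 linear0 scale0r subrr.
have wa : vdot a w = 0 by rewrite linearB /= !vdotZr (vdotC a b) mulrC subrr.
apply/eqP; rewrite -vdot_self_eq0 {2}/w linearB /= !vdotZr !(vdotC w) wa (ab _ wa).
by rewrite !mulr0 subrr.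
Qed.
End vdot.

Lemma continuous_sum (T : topologicalType) (K : numFieldType) (I : Type)
    (r : seq I) (P : pred I) (F : I -> T -> K) :
  (forall i, P i -> continuous (F i)) ->
  continuous (fun x => \sum_(i <- r | P i) F i x).
Proof.
move=> cF; rewrite -fct_sumE.
apply: (big_ind (fun g : T -> K => continuous g)) => //.
- exact: cst_continuous.
- by move=> f g cf cg x; apply: (continuousD (cf x) (cg x)).
Qed.

Section MVT_line.
Variables (R : realType) (V : normedModType R).

Lemma is_derive_line (f : V -> R) (p e : V) (t : R) :
  derivable f (p + t *: e) e ->
  is_derive t 1 (fun s => f (p + s *: e)) ('D_e f (p + t *: e)).
Proof.
move=> fd.
have line_shift :
    (fun h : R => h^-1 *: (((fun s => f (p + s *: e)) \o shift t) (h *: 1)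
                           - f (p + t *: e))) =
    (fun h : R => h^-1 *: ((f \o shift (p + t *: e)) (h *: e)
                           - f (p + t *: e))).
  apply: funext => h /=; congr (_ *: (f _ - _)).
  by rewrite scaler1 scalerDl addrCA addrA.
split; first by rewrite /derivable line_shift.
by rewrite /derive line_shift.
Qed.

Lemma MVT_line (f : V -> R) (p e : V) (t : R) :
  (forall y, derivable f y e) ->
  exists2 c : R, `|c| <= `|t| & f (p + t *: e) - f p = t * 'D_e f (p + c *: e).
Proof.
move=> fd; pose g s := f (p + s *: e).
have gd (s : R) : is_derive s (1 : R) g ('D_e f (p + s *: e)).
  exact: is_derive_line.
have gc : continuous g.
  by move=> s; apply/differentiable_continuous/derivable1_diffP; have [] := gd s.
have g0 : g 0 = f p by rewrite /g scale0r addr0.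
have [t0|t0] := lerP 0 t.
  have [c] := MVT_segment t0 (fun s _ => gd s) (continuous_subspaceT gc).
  rewrite in_itv /= => /andP[c0 ct] gtc.
  exists c; first by rewrite !ger0_norm.
  by rewrite -g0 -/(g t) gtc subr0 mulrC.
have [c] := MVT_segment (ltW t0) (fun s _ => gd s) (continuous_subspaceT gc).
rewrite in_itv /= => /andP[tc c0] gtc.
exists c; first by rewrite !ler0_norm ?lerN2 // ltW.
by rewrite -g0 -[LHS]opprB -/(g t) gtc sub0r mulrN opprK mulrC.
Qed.

End MVT_line.

Section continuous_partials.
Variables (R : realType) (n : nat).
Notation V := 'rV[R]_n.

Definition grad (f : V -> R) (x : V) : V := \row_i 'D_(delta_mx 0 i) f x.

Lemma mx_norm_entry (v : V) j : `|v 0 j| <= `|v|.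
Proof.
rewrite [leRHS]/Num.Def.normr /= mx_normrE.
exact: (le_bigmax _ (fun ij : 'I_1 * 'I_n => `|v ij.1 ij.2|) (0, j)).
Qed.

Lemma mx_norm_le_entries (v : V) (M : R) :
  0 <= M -> (forall j, `|v 0 j| <= M) -> `|v| <= M.
Proof.
move=> M0 vM; rewrite [leLHS]/Num.Def.normr /= mx_normrE.
by apply: bigmax_le => // -[i j] _ /=; rewrite (ord1 i).
Qed.

(* x + row_prefix k h, 0 <= k <= n, walks from x to x + h one axis at a time. *)
Definition row_prefix (k : nat) (h : V) : V :=
  \row_j (if (j < k)%N then h 0 j else 0).

Lemma row_prefix0 (h : V) : row_prefix 0 h = 0.
Proof. by apply/rowP => j; rewrite !mxE. Qed.

Lemma row_prefix_full (h : V) : row_prefix n h = h.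
Proof. by apply/rowP => j; rewrite !mxE ltn_ord. Qed.

Lemma row_prefixS (h : V) (k : 'I_n) :
  row_prefix k.+1 h = row_prefix k h + h 0 k *: delta_mx 0 k.
Proof.
apply/rowP => j; rewrite !mxE eqxx /= ltnS -val_eqE /=.
have [jk|kj|/val_inj->] := ltngtP j k.
- by rewrite mulr0 addr0.
- by rewrite mulr0 addr0.
- by rewrite mulr1 add0r.
Qed.

Lemma norm_row_prefix_segment (h : V) (k : 'I_n) (c : R) :
  `|c| <= `|h 0 k| -> `|row_prefix k h + c *: delta_mx 0 k| <= `|h|.
Proof.
move=> ch; apply: mx_norm_le_entries => // j; rewrite !mxE eqxx /= -val_eqE /=.
have [jk|kj|_] := ltngtP j k.
- by rewrite mulr0 addr0 mx_norm_entry.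
- by rewrite mulr0 addr0 normr0.
- by rewrite mulr1 add0r (le_trans ch) ?mx_norm_entry.
Qed.

Lemma vdot_continuous (u : V) : continuous (vdot u).
Proof.
apply: continuous_sum => i _ x.
apply: (@continuousM _ _ (cst (u 0 i))); first exact: cst_continuous.
exact: coord_continuous.
Qed.

Lemma increment_along_coordinate (f : V -> R) (x h : V) (k : 'I_n) (eps : R) :
  (forall y, derivable f y (delta_mx 0 k)) ->
  (forall y, `|y - x| <= `|h| ->
     `|'D_(delta_mx 0 k) f y - 'D_(delta_mx 0 k) f x| <= eps) ->
  `|f (x + row_prefix k.+1 h) - f (x + row_prefix k h)
     - h 0 k * 'D_(delta_mx 0 k) f x| <= `|h| * eps.
Proof.
move=> fd near_x.
rewrite row_prefixS addrA.
have [c ck ->] := MVT_line (x + row_prefix k h) (h 0 k) fd.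
rewrite -mulrBr normrM.
apply: ler_pM => //; first exact: mx_norm_entry.
by apply: near_x; rewrite addrC !addrA addNr add0r norm_row_prefix_segment.
Qed.

Lemma increment_telescope (f : V -> R) (x h : V) :
  f (x + h) - f x - vdot (grad f x) h =
  \sum_(k < n) (f (x + row_prefix k.+1 h) - f (x + row_prefix k h)
                - h 0 k * 'D_(delta_mx 0 k) f x).
Proof.
rewrite sumrB; congr (_ - _); last by apply: eq_bigr => k _; rewrite mxE mulrC.
rewrite -(big_mkord xpredT (fun k => f (x + row_prefix k.+1 h)
                                    - f (x + row_prefix k h))).
by rewrite telescope_sumr // row_prefix_full row_prefix0 addr0.
Qed.

Lemma diff_continuous_partials (f : V -> R) (x : V) :
  (forall y i, derivable f y (delta_mx 0 i)) ->
  (forall i, continuous ('D_(delta_mx 0 i) f)) ->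
  'd f x = vdot (grad f x) :> (V -> R).
Proof.
move=> fd fc.
(* R^o and the normed module R carry the same scaling. *)
pose L : {linear V -> R} :=
  HB.pack (vdot (grad f x))
    (GRing.isLinear.Build R V R *:%R _ (vdot_is_linear _)).
apply: (@diff_unique _ _ _ f L); first exact: vdot_continuous.
apply/eqaddoP => e e0.
pose eps := e / n.+1%:R. (* n.+1, not n, so that n = 0 is no special case *)
have eps0 : 0 < eps by rewrite divr_gt0.
have : \forall y \near x, forall k : 'I_n,
    `|'D_(delta_mx 0 k) f x - 'D_(delta_mx 0 k) f y| <= eps.
  apply: (@filter_forall _ _ _ (nbhs x) (nbhs_filter x)) => k.
  by move: (fc k x) => /cvgrPdist_le /(_ _ eps0).
move=> /nbhs_ballP[d d0 near_x].
near=> h.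
have hd : `|h| < d by near: h; exact: (@nbhs0_lt R V _ d0).
have partials_near k y : `|y - x| <= `|h| ->
    `|'D_(delta_mx 0 k) f y - 'D_(delta_mx 0 k) f x| <= eps.
  move=> yh; rewrite distrC; apply: near_x.
  by rewrite -ball_normE /= distrC (le_lt_trans yh hd).
have -> : (f \o shift x - (cst (f x) + L)) h =
    f (x + h) - f x - vdot (grad f x) h.
  by rewrite !fctE /= [h + x]addrC opprD addrA.
rewrite increment_telescope.
apply: le_trans (ler_norm_sum _ _ _) _.
apply: le_trans (ler_sum _ (fun k _ =>
  increment_along_coordinate (fd ^~ k) (partials_near k))) _.
rewrite sumr_const card_ord -mulr_natl.
have nN : n%:R / n.+1%:R <= 1 :> R by rewrite ler_pdivrMr // mul1r ler_nat.
rewrite (_ : _ * (_ * eps) = e * `|h| * (n%:R / n.+1%:R)); last first.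
  by rewrite /eps; ring.
by rewrite ler_piMr ?mulr_ge0 // ltW.
Unshelve. all: by end_near.
Qed.

End continuous_partials.

Section poisson_R3.
Variable R : realType.
Notation V := 'rV[R]_3.

Lemma smooth_diffE (f : V -> R) (x : V) :
  smooth f -> 'd f x = vdot (grad f x) :> (V -> R).
Proof. by move=> /(_ 1%N)[_ [fd fc]]; apply: diff_continuous_partials. Qed.

Lemma gdE (H S : V -> R) (x : V) :
  gd H S x = vdot (grad H x) (grad S x) *: grad H x
             - vdot (grad H x) (grad H x) *: grad S x.
Proof.
apply/rowP => i; rewrite !mxE /vdot.
under eq_bigr do rewrite mxE mulrBl -mulrA.
rewrite sumrB -mulr_sumr mulrC; congr (_ - _).
  by apply: congr2 => //; apply: eq_bigr => j _; rewrite !mxE.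
rewrite (bigD1 i) //= eqxx mul1r [X in _ + X]big1 ?addr0 => [|j /negPf ji].
  by congr (_ * _); apply: eq_bigr => j _; rewrite !mxE.
by rewrite eq_sym ji !mul0r.
Qed.
End poisson_R3.

Theorem mainTheorem6 (R : realType) (P : 'rV[R]_3 -> 'M[R]_3)
  (H S : 'rV[R]_3 -> R) :
  poisson_tensor P -> smooth H -> smooth S ->
  (forall x, Pd P S x = 0) ->
  forall x : 'rV[R]_3,
    xi P H S x = xiP P H x <->
    ((forall v : 'rV[R]_3, 'd H x v = 0) \/ crit_on_level S H x).
Proof.
move=> _ smoothH smoothS _ x.
rewrite /crit_on_level (smooth_diffE x smoothH) (smooth_diffE x smoothS).
rewrite -orth_part_eq0P -gdE -[xiP P H x]addr0 /xi /xiP.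
by split=> [/addrI|->].
Qed.
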